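(* Let $k\ge3$ be odd and let $(w_1,w_2)$ be a weak CLT pair with $w_1,w_2\in\mathcal V_k$ and $\mathrm{wt}((w_1,w_2))=k$. Then: (i) each $w_i$ ($i=1,2$) satisfies $N^{w_i}_{\{1,1\}}=1$ and $\check w_i$ is a Wigner word of length $k$; (ii) $\mathrm{supp}(w_1)\cap\mathrm{supp}(w_2)=\{1\}$; (iii) $\mathbb{E}[\bar T_{w_1}\bar T_{w_2}]=\mathbb{E}[\xi_{11}^2]$; (iv) summing over a set of representatives of equivalence classes of all such pairs, $\sum_{(w_1,w_2)}\mathbb{E}[\bar T_{w_1}\bar T_{w_2}]=a_k^2\,\mathbb{E}[\xi_{11}^2]$.
   Context: $\{\xi_{ij}\}_{1\le i\le j}$ independent real random variables; $\{\xi_{ii}\}$ i.i.d. with mean zero, all moments finite; $\{\xi_{ij}\}_{i<j}$ i.i.d. with mean zero, $\mathbb{E}[\xi_{12}^2]=1$, all moments finite; $\xi_e=\xi_{\min(i,j),\max(i,j)}$ for $e=\{i,j\}$. A word is a finite sequence $w=(s_1,\dots,s_m)$ of positive integers; $\ell(w)=m$; closed if $s_1=s_m$; $\mathrm{supp}(w)$ its letter set; $E_w=\{\{s_i,s_{i+1}\}:1\le i\le m-1\}$ (undirected; self edge $\{u,u\}$); $N_e^w=\#\{i\le m-1:\{s_i,s_{i+1}\}=e\}$. For $a=(w_1,w_2)$: $\mathrm{wt}(a)=\#(\mathrm{supp}(w_1)\cup\mathrm{supp}(w_2))$, $E_a=E_{w_1}\cup E_{w_2}$, $N_e^a=N_e^{w_1}+N_e^{w_2}$;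 equivalence = bijection of supports mapping one to the other letter by letter. Weak CLT pair: $N_e^a\ge2$ for all $e\in E_a$ and $E_{w_1}\cap E_{w_2}\ne\emptyset$. $\mathcal V_k$ = closed words of length $k+1$ with first letter $1$ having at least one self edge. $\check w$ is obtained from $w$ by deleting each letter equal to its predecessor. A Wigner word is a closed word $w$ with $N_e^w\ge2$ for all $e\in E_w$ and $\mathrm{wt}(w)=(\ell(w)+1)/2$ (single-letter words are also Wigner words). $T_w=\prod_{e\in E_w}\xi_e^{N_e^w}$, $\bar T_w=T_w-\mathbb{E}T_w$. For odd $k$, $a_k$ is the number of equivalence classes of closed words $w$ of length $k+1$ starting at $1$ with $N^w_{\{1,1\}}=1$ and $\check w$ a Wigner word of length $k$. *)

From HB Require Import structures.
From mathcomp Require Import all_boot all_order all_algebra.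
Set Implicit Arguments. Unset Strict Implicit. Unset Printing Implicit Defensive.
Import Order.TTheory GRing.Theory Num.Theory.

Definition is_word (w : seq nat) : bool := all (fun x => 0 < x) w.

Definition closedw (w : seq nat) : bool :=
  if w is s1 :: s then s1 == last s1 s else false.

(* undirected edge {x,y} encoded as (min, max); self edge {u,u} = (u,u) *)
Definition uedge (x y : nat) : nat * nat := (minn x y, maxn x y).

Definition steps (w : seq nat) : seq (nat * nat) :=
  [seq uedge p.1 p.2 | p <- zip w (behead w)].

Definition edgesw (w : seq nat) : seq (nat * nat) := undup (steps w).

Definition Ncount (e : nat * nat) (w : seq nat) : nat := count_mem e (steps w).

Definition wtw (w : seq nat) : nat := size (undup w).

Definition wtp (a : seq nat * seq nat) : nat := size (undup (a.1 ++ a.2)).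

Definition weak_CLT_pair (a : seq nat * seq nat) : bool :=
  all (fun e => 2 <= Ncount e a.1 + Ncount e a.2) (steps a.1 ++ steps a.2)
  && has (fun e => e \in steps a.2) (steps a.1).

Definition in_V (k : nat) (w : seq nat) : bool :=
  [&& is_word w, size w == k.+1, closedw w, head 0 w == 1 &
      has (fun e : nat * nat => e.1 == e.2) (steps w)].

Fixpoint check_aux (p : nat) (s : seq nat) : seq nat :=
  if s is y :: s' then (if y == p then check_aux y s' else y :: check_aux y s')
  else [::].
Definition checkw (w : seq nat) : seq nat :=
  if w is x :: s then x :: check_aux x s else [::].

Definition wigner (w : seq nat) : bool :=
  [&& closedw w, all (fun e => 2 <= Ncount e w) (steps w) &
      (wtw w).*2 == (size w).+1].

Definition equiv_word (w w' : seq nat) : Prop :=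
  exists f : nat -> nat, {in w &, injective f} /\ map f w = w'.
Definition equiv_pair (a b : seq nat * seq nat) : Prop :=
  exists f : nat -> nat, {in a.1 ++ a.2 &, injective f} /\
    map f a.1 = b.1 /\ map f a.2 = b.2.

(* Moments: md p = E[xi_11^p], mo p = E[xi_12^p].  By independence of the
   entries, expectations of monomials factor over distinct edges. *)
Section Moments.
Variable R : nzRingType.
Variables md mo : nat -> R.
Definition emom (e : nat * nat) (p : nat) : R :=
  if e.1 == e.2 then md p else mo p.
Definition ET (w : seq nat) : R :=
  \prod_(e <- edgesw w) emom e (Ncount e w).
Definition ET2 (w1 w2 : seq nat) : R :=
  \prod_(e <- undup (steps w1 ++ steps w2)) emom e (Ncount e w1 + Ncount e w2).
Definition Ecov (w1 w2 : seq nat) : R := ET2 w1 w2 - ET w1 * ET w2.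
End Moments.

Definition good_pair (k : nat) (a : seq nat * seq nat) : bool :=
  [&& weak_CLT_pair a, in_V k a.1, in_V k a.2 & wtp a == k].

Definition ak_word (k : nat) (w : seq nat) : bool :=
  [&& is_word w, size w == k.+1, closedw w, head 0 w == 1,
      Ncount (1, 1) w == 1, wigner (checkw w) & size (checkw w) == k].

Definition reps (T : eqType) (P : T -> bool) (eqv : T -> T -> Prop) (S : seq T) : Prop :=
  [/\ uniq S, all P S,
      (forall a b, a \in S -> b \in S -> eqv a b -> a = b) &
      (forall a, P a -> exists2 b, b \in S & eqv a b)].

From HB Require Import structures.
From mathcomp Require Import all_boot all_order all_algebra zify.
Set Implicit Arguments. Unset Strict Implicit. Unset Printing Implicit Defensive.
Import GRing.Theory.

(* Let L be the 2k steps of w1 followed by those of w2.  Every edge occurs at least twice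
   in L, so L has at most k distinct edges; the walk w1 ++ w2 is connected and visits
   k letters, so L has at least k - 1 distinct non-loop edges.  Each word contains a loop,
   hence L has a single loop edge, k - 1 non-loop edges, and every edge occurs exactly
   twice.  A non-loop edge traversed once by each word could be avoided by splicing the two
   walks, leaving a connected walk through all k letters on k - 2 non-loop edges; so each
   word traverses its own non-loop edges twice and has at most (k + 1) / 2 letters.  As the
   two supports cover k letters and share 1, they meet exactly in 1, the loop is (1, 1), and
   deleting it from either word leaves a Wigner word.  The covariance is E[xi_11^2] since
   E[T_w1] has the factor E[xi_11] = 0, and a pair is determined up to equivalence by the
   classes of its two words, which gives a_k^2 classes. *)

(** * Edges and steps of words *)

Definition loop (e : nat * nat) : bool := e.1 == e.2.

Lemma uedgeC x y : uedge x y = uedge y x.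
Proof. by rewrite /uedge minnC maxnC. Qed.

Lemma uedgeE x y : uedge x y = (x, y) \/ uedge x y = (y, x).
Proof. by rewrite /uedge; case: (leqP x y) => h; [left|right]; congr pair; lia. Qed.

Lemma uedge_sorted x y : (uedge x y).1 <= (uedge x y).2.
Proof. by rewrite /uedge /=; lia. Qed.

Lemma loop_uedge x y : loop (uedge x y) = (x == y).
Proof. by rewrite /loop /uedge /=; apply/eqP/eqP; lia. Qed.

Lemma uedge_inj a b c d : uedge a b = uedge c d -> (a = c /\ b = d) \/ (a = d /\ b = c).
Proof.
by case: (uedgeE a b) (uedgeE c d) => -> [] -> [-> ->]; [left|right|right|left].
Qed.

Lemma head1_mem w : w != [::] -> head 0 w = 1 -> 1 \in w.
Proof. by case: w => //= x w _ ->; rewrite mem_head. Qed.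

Lemma steps_cons2 x y s : steps (x :: y :: s) = uedge x y :: steps (y :: s).
Proof. by []. Qed.

Lemma size_steps s : size (steps s) = (size s).-1.
Proof. by elim: s => [|x [|y s] IH] //; rewrite steps_cons2 /= IH. Qed.

Lemma mem_steps e s : e \in steps s -> (e.1 \in s) && (e.2 \in s).
Proof.
elim: s => [|x [|y s] IH] //; rewrite steps_cons2 in_cons.
case/orP => [/eqP -> | /IH /andP [h1 h2]]; last by rewrite !(in_cons x) h1 h2 !orbT.
by case: (uedgeE x y) => -> /=; rewrite !inE !eqxx ?orbT.
Qed.

Lemma steps_cat x s y t :
  steps (x :: s ++ y :: t) = steps (x :: s) ++ uedge (last x s) y :: steps (y :: t).
Proof. by elim: s x => [|z s IH] x //; rewrite cat_cons !steps_cons2 IH. Qed.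

Lemma steps_rcons x s y : steps (rcons (x :: s) y) = rcons (steps (x :: s)) (uedge (last x s) y).
Proof. by rewrite -!cats1 steps_cat. Qed.

Lemma steps_rev s : steps (rev s) = rev (steps s).
Proof.
elim: s => [|x [|y s] IH] //.
rewrite rev_cons; case def_r: (rev (y :: s)) => [|z r].
  by move/(congr1 size): def_r; rewrite size_rev.
have last_r : last z r = y by move/(congr1 (last 0)): def_r; rewrite rev_cons last_rcons.
by rewrite steps_rcons last_r -def_r IH steps_cons2 rev_cons uedgeC.
Qed.

Lemma nonloop_steps_cat s t f : last 0 s = head 0 t ->
  f \in steps (s ++ t) -> ~~ loop f -> f \in steps s ++ steps t.
Proof.
case: s => [|x s] //; case: t => [|y t]; first by rewrite !cats0 => _ ->.
move=> /= join; rewrite steps_cat mem_cat in_cons join.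
by case/or3P => [h|/eqP ->|h]; rewrite ?mem_cat ?h ?orbT ?loop_uedge ?eqxx.
Qed.

Lemma split_at_step w e : e \in steps w ->
  exists P Q, [/\ w = P ++ Q, P != [::], Q != [::], e = uedge (last 0 P) (head 0 Q)
                & steps w = steps P ++ e :: steps Q].
Proof.
elim: w => [|a [|b w] IH] //; rewrite steps_cons2 in_cons.
case/orP => [/eqP ->|/IH [P [Q [wE nP nQ -> stE]]]].
  by exists [:: a], (b :: w).
case: P wE nP stE => [|x P] // [-> ->] _ stE.
by exists (a :: x :: P), Q; split; rewrite // stE.
Qed.

Lemma steps_check_aux p s : steps (p :: check_aux p s) = [seq e <- steps (p :: s) | ~~ loop e].
Proof.
elim: s p => [|y s IH] p //.
rewrite [check_aux _ _]/= steps_cons2 [filter _ (_ :: _)]/= loop_uedge.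
by case: (eqVneq y p) => [-> | _]; rewrite ?steps_cons2 IH.
Qed.

Lemma mem_check_aux p s : p :: check_aux p s =i p :: s.
Proof.
elim: s p => [|y s IH] p z //=.
case: (eqVneq y p) => [-> | _]; first by rewrite IH !in_cons orbA orbb.
by rewrite in_cons IH !in_cons.
Qed.

Lemma last_check_aux p s : last p (check_aux p s) = last p s.
Proof. by elim: s p => [|y s IH] p //=; case: (eqVneq y p) => [->|_] /=; rewrite IH. Qed.

Lemma steps_checkw w : steps (checkw w) = [seq e <- steps w | ~~ loop e].
Proof. by case: w => // x s; apply: steps_check_aux. Qed.

Lemma mem_checkw w : checkw w =i w.
Proof. by case: w => // x s; apply: mem_check_aux. Qed.

Lemma closedw_checkw w : closedw (checkw w) = closedw w.
Proof. by case: w => // x s; rewrite /= last_check_aux. Qed.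

Lemma size_checkw w : w != [::] -> size (checkw w) = (size [seq e <- steps w | ~~ loop e]).+1.
Proof. by case: w => // x s _; rewrite -steps_checkw size_steps. Qed.

(** * Counting edges of walks *)

Lemma mem_size1 (T : eqType) (s : seq T) x y : size s = 1 -> x \in s -> y \in s -> x = y.
Proof. by case: s => [|z [|]] //= _; rewrite !inE => /eqP -> /eqP ->. Qed.

Lemma size_undup_subset (T : eqType) (s t : seq T) :
  {subset s <= t} -> size (undup s) <= size (undup t).
Proof.
by move=> st; apply: uniq_leq_size (undup_uniq s) _ => x; rewrite !mem_undup => /st.
Qed.

Lemma size_undup_filterC (T : eqType) (p : pred T) (s : seq T) :
  size (undup s) = size (undup (filter p s)) + size (undup (filter (predC p) s)).
Proof. by rewrite -!filter_undup !size_filter count_predC. Qed.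

Lemma sum_count_mem (T : eqType) (s r : seq T) :
  uniq r -> {subset s <= r} -> \sum_(x <- r) count_mem x s = size s.
Proof.
move=> r_uniq; elim: s => [|y s IH] sub_r; first by rewrite big1_seq.
rewrite big_split /= IH => [|x xs]; last by apply: sub_r; rewrite in_cons xs orbT.
rewrite -[(size s).+1]add1n; congr (_ + _); transitivity (count_mem y r).
  by elim: (r) => [|x t IHt]; rewrite ?big_nil ?big_cons ?IHt // eq_sym.
by rewrite (count_uniq_mem y r_uniq) (sub_r y (mem_head y s)).
Qed.

Lemma sum_count_undup (T : eqType) (s : seq T) : \sum_(x <- undup s) count_mem x s = size s.
Proof. by apply: sum_count_mem (undup_uniq s) _ => x; rewrite mem_undup. Qed.

Lemma sum_seq_const2 (T : Type) (r : seq T) : \sum_(x <- r) 2 = (size r).*2.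
Proof. by rewrite big_const_seq count_predT iter_addn_0 mul2n. Qed.

Lemma double_size_undup_eq (T : eqType) (s : seq T) :
  (forall x, x \in s -> count_mem x s = 2) -> (size (undup s)).*2 = size s.
Proof.
move=> c2; rewrite -sum_seq_const2 -(sum_count_undup s) !big_seq.
by apply: eq_bigr => x; rewrite mem_undup => /c2.
Qed.

Section DoubleCount.
Variables (T : eqType) (s : seq T).
Hypothesis count_ge2 : forall x, x \in s -> 2 <= count_mem x s.

Lemma double_size_undup_leq : (size (undup s)).*2 <= size s.
Proof.
rewrite -sum_seq_const2 -sum_count_undup big_seq [X in _ <= X]big_seq.
by apply: leq_sum => x; rewrite mem_undup => /count_ge2.
Qed.

Lemma count_mem_eq2 : (size (undup s)).*2 = size s -> forall x, x \in s -> count_mem x s = 2.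
Proof.
move=> size_s x xs.
have : \sum_(y <- undup s) (count_mem y s - 2) + (size (undup s)).*2 = size s.
  rewrite -sum_seq_const2 -big_split -sum_count_undup !big_seq /=.
  by apply: eq_bigr => y; rewrite mem_undup => /count_ge2 /subnK.
rewrite -size_s -{2}[_.*2]add0n => /addIn /eqP.
rewrite sum_nat_seq_eq0 => /allP /(_ x); rewrite mem_undup => /(_ xs) /=.
by have := count_ge2 xs; lia.
Qed.

End DoubleCount.

Lemma wtw_leq_nonloop u : u != [::] ->
  wtw u <= (size (undup [seq e <- steps u | ~~ loop e])).+1.
Proof.
elim: u => [|x [|y u] IH] // _; move: {IH}(IH isT).
rewrite steps_cons2 [filter _ (_ :: _)]/= loop_uedge.
set U := y :: u; set F := [seq e <- steps U | ~~ loop e] => IH.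
have -> : wtw (x :: U) = (x \notin U) + wtw U by rewrite /wtw [undup _]/=; case: (x \in U).
case: (boolP (x \in U)) => xU.
  apply: leq_trans IH _; rewrite ltnS; case: (x != y) => //.
  by apply: size_undup_subset => e; rewrite in_cons orbC => ->.
have -> : x != y by apply: contraNneq xU => ->; apply: mem_head.
have /negbTE eF : uedge x y \notin F.
  rewrite mem_filter negb_and; apply/orP; right; apply/negP => /mem_steps.
  by case: (uedgeE x y) => -> /andP [] //; rewrite (negbTE xU).
by rewrite [undup _]/= eF.
Qed.

Lemma split_single_step w e : count_mem e (steps w) = 1 ->
  exists P Q, [/\ w = P ++ Q, P != [::], Q != [::], e = uedge (last 0 P) (head 0 Q)
                & e \notin steps P ++ steps Q].
Proof.
move=> c1; have [|P [Q [wE nP nQ eE stE]]] := split_at_step (e := e) (w := w).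
  by rewrite -has_pred1 has_count c1.
exists P, Q; split=> //; apply/count_memPn.
by move: c1; rewrite stE count_cat /= eqxx count_cat; lia.
Qed.

Lemma nonloop_steps_cat4 A B C D f : B != [::] -> C != [::] ->
  last 0 A = head 0 B -> last 0 B = head 0 C -> last 0 C = head 0 D ->
  f \in steps (A ++ B ++ C ++ D) -> ~~ loop f ->
  f \in steps A ++ steps B ++ steps C ++ steps D.
Proof.
case: B => // b B _; case: C => // c C _ jAB jBC jCD fW nf.
have := nonloop_steps_cat (t := (b :: B) ++ (c :: C) ++ D) jAB fW nf.
rewrite !mem_cat => /orP [-> // | fBCD].
have := nonloop_steps_cat (t := (c :: C) ++ D) jBC fBCD nf.
rewrite mem_cat => /orP [-> | fCD]; rewrite ?orbT //.
by have := nonloop_steps_cat jCD fCD nf; rewrite mem_cat => /orP [->|->]; rewrite ?orbT.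
Qed.

Lemma head_rev (T : Type) (x0 : T) s : head x0 (rev s) = last x0 s.
Proof. by case/lastP: s => // s x; rewrite rev_rcons last_rcons. Qed.

Lemma last_rev (T : Type) (x0 : T) s : last x0 (rev s) = head x0 s.
Proof. by case: s => // x s; rewrite rev_cons last_rcons. Qed.

Lemma steps_cat_subset P Q : {subset steps P ++ steps Q <= steps (P ++ Q)}.
Proof.
case: P => [|x P] // f; case: Q => [|y Q]; first by rewrite !cats0.
by rewrite steps_cat !mem_cat in_cons => /orP [->|->]; rewrite ?orbT.
Qed.

Lemma reroute_shared_step w1 w2 e :
  head 0 w1 = 1 -> last 0 w1 = 1 -> head 0 w2 = 1 -> last 0 w2 = 1 -> ~~ loop e ->
  count_mem e (steps w1) = 1 -> count_mem e (steps w2) = 1 ->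
  exists2 W, {subset w1 ++ w2 <= W} &
    {subset [seq f <- steps W | ~~ loop f] <= [seq f <- steps w1 ++ steps w2 | f != e]}.
Proof.
move=> h1 l1 h2 l2 ne /split_single_step [P1 [Q1 [wE1 nP1 nQ1 eE1 eP1]]].
move=> /split_single_step [P2 [Q2 [wE2 nP2 nQ2 eE2 eP2]]]; subst w1 w2.
have ends X Y : X != [::] -> Y != [::] -> head 0 (X ++ Y) = head 0 X /\ last 0 (X ++ Y) = last 0 Y.
  by case: X => // x X; case: Y => // y Y; rewrite /= last_cat.
have [hP1 lQ1] := ends _ _ nP1 nQ1; have [hP2 lQ2] := ends _ _ nP2 nQ2.
rewrite hP1 in h1; rewrite lQ1 in l1; rewrite hP2 in h2; rewrite lQ2 in l2.
have [P [Q [[nP nQ hP lQ] [jP jQ] suppE stepsE]]] : exists P Q,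
    [/\ [/\ P != [::], Q != [::], head 0 P = 1 & last 0 Q = 1],
        last 0 P1 = head 0 Q /\ last 0 P = head 0 Q1,
        P2 ++ Q2 =i P ++ Q & steps P2 ++ steps Q2 =i steps P ++ steps Q].
  have nrev (X : seq nat) : X != [::] -> rev X != [::] by rewrite -!size_eq0 size_rev.
  case: (uedge_inj (etrans (esym eE1) eE2)) => -[jP jQ].
    exists (rev Q2), (rev P2); rewrite !head_rev !last_rev -jP -jQ.
    split=> //; first by split; rewrite ?nrev.
      by move=> z; rewrite !mem_cat !mem_rev orbC.
    by move=> f; rewrite !steps_rev !mem_cat !mem_rev orbC.
  by exists P2, Q2.
(* Both Q1 ++ P1 and Q ++ P lead from one endpoint of e to the other without using e. *)
exists (Q1 ++ P1 ++ Q ++ P).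
  move=> z; rewrite mem_cat => /orP [zw|zw]; [|rewrite suppE in zw];
  by move: zw; rewrite !mem_cat => /orP [->|->]; rewrite ?orbT.
move=> f; rewrite !mem_filter => /andP [nf fW].
have jQP1 : last 0 Q1 = head 0 P1 by rewrite l1 h1.
have jQP : last 0 Q = head 0 P by rewrite lQ hP.
have fL := nonloop_steps_cat4 nP1 nQ jQP1 jP jQP fW nf.
have fPQ : (f \in steps P1 ++ steps Q1) || (f \in steps P2 ++ steps Q2).
  by move: fL; rewrite stepsE !mem_cat; case/or4P => ->; rewrite ?orbT.
apply/andP; split.
  by apply: contraTneq fPQ => ->; rewrite negb_or eP1 eP2.
by case/orP: fPQ => /steps_cat_subset fw; rewrite mem_cat fw ?orbT.
Qed.

Lemma count_nonloop_steps e w : ~~ loop e ->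
  count_mem e [seq f <- steps w | ~~ loop f] = count_mem e (steps w).
Proof.
move=> ne; rewrite count_filter; apply: eq_count => f /=.
by apply/andP/eqP => [[/eqP]|->].
Qed.

Lemma size_undup_cat (T : eqType) (s t : seq T) :
  size (undup (s ++ t)) + count (mem t) (undup s) = size (undup s) + size (undup t).
Proof.
rewrite undup_cat size_cat size_filter -(count_predC (mem t) (undup s)).
by rewrite addnAC [_ + count (mem t) _]addnC; congr (_ + _ + _); apply: eq_count.
Qed.

Lemma wtw_checkw w : wtw (checkw w) = wtw w.
Proof.
by apply/eqP; rewrite eqn_leq /wtw !size_undup_subset // => x; rewrite mem_checkw.
Qed.

Lemma wigner_checkw w : closedw w ->
  (forall e, e \in steps w -> ~~ loop e -> 2 <= count_mem e (steps w)) ->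
  (wtw w).*2 = (size (checkw w)).+1 -> wigner (checkw w).
Proof.
move=> cw c2 wt; apply/and3P; split; rewrite ?closedw_checkw ?wtw_checkw ?wt //.
apply/allP => e; rewrite /Ncount steps_checkw mem_filter => /andP [ne ew].
by rewrite count_nonloop_steps ?c2.
Qed.

Lemma double_wtw_leq w : w != [::] ->
  (forall e, e \in steps w -> ~~ loop e -> count_mem e (steps w) = 2) ->
  (wtw w).*2 <= (size [seq e <- steps w | ~~ loop e]).+2.
Proof.
move=> nw c2; set F := [seq e <- steps w | ~~ loop e].
have <- : (size (undup F)).*2 = size F.
  apply: double_size_undup_eq => e; rewrite mem_filter => /andP [ne ew].
  by rewrite count_nonloop_steps ?c2.
by rewrite -doubleS leq_double wtw_leq_nonloop.
Qed.

Lemma meet_supports (s t : seq nat) a k :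
  (wtw s).*2 <= k.+1 -> (wtw t).*2 <= k.+1 -> wtw (s ++ t) = k -> a \in s -> a \in t ->
  [/\ forall x, (x \in s) && (x \in t) = (x == a), (wtw s).*2 = k.+1 & (wtw t).*2 = k.+1].
Proof.
rewrite /wtw => ws wt wst a_s a_t; have := size_undup_cat s t; rewrite wst.
have : 0 < count (mem t) (undup s).
  by rewrite -has_count; apply/hasP; exists a; rewrite ?mem_undup.
rewrite -size_filter; set c := size _ => c_gt0 sizeE.
have c1 : c = 1 by move: ws wt; rewrite -!muln2; lia.
split; try by move: ws wt; rewrite -!muln2; lia.
move=> x; apply/idP/eqP => [/andP [xs xt] | ->]; last by rewrite a_s a_t.
case: (eqVneq x a) => // xa; suff : 2 <= c by rewrite c1.
apply: (uniq_leq_size (s1 := [:: x; a])); first by rewrite /= inE xa.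
by move=> y; rewrite !inE mem_filter mem_undup => /orP [] /eqP ->; apply/andP.
Qed.

(** * Weak CLT pairs of weight k *)

Lemma in_V_props k w : in_V k w ->
  [/\ w != [::], head 0 w = 1, last 0 w = 1, size (steps w) = k & has loop (steps w)].
Proof.
case/and5P => _ /eqP sz; rewrite size_steps sz -size_eq0 sz.
by case: w sz => // x s _ /= /eqP <- /eqP ->.
Qed.

Lemma good_pair_sym k w1 w2 : good_pair k (w1, w2) -> good_pair k (w2, w1).
Proof.
case/and4P => /andP [c2 shared] V1 V2 wt; apply/and4P; split=> //.
- apply/andP; split.
    by apply/allP => e; rewrite mem_cat orbC -mem_cat addnC => /(allP c2).
  by apply/hasP; case/hasP: shared => e e1 e2; exists e.
rewrite /wtp /= -(eqP wt); apply/eqP/perm_size/uniq_perm; rewrite ?undup_uniq // => x.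
by rewrite !mem_undup !mem_cat orbC.
Qed.

Section GoodPair.
Variables (k : nat) (w1 w2 : seq nat).
Hypothesis good : good_pair k (w1, w2).

Local Notation L := (steps w1 ++ steps w2).

Lemma good_in_V : in_V k w1 /\ in_V k w2.
Proof. by case/and4P: good. Qed.

Lemma good_wtw_cat : wtw (w1 ++ w2) = k.
Proof. by case/and4P: good => _ _ _ /eqP. Qed.

Lemma good_count_ge2 e : e \in L -> 2 <= count_mem e L.
Proof. by case/and4P: good => /andP [/allP c2 _] _ _ _ /c2; rewrite count_cat. Qed.

Lemma good_edge_counts :
  [/\ size (undup [seq e <- L | loop e]) = 1,
      size (undup [seq e <- L | ~~ loop e]) = k.-1 &
      forall e, e \in L -> count_mem e L = 2].
Proof.
have [/in_V_props [nw1 h1 l1 s1 loop1] /in_V_props [nw2 h2 l2 s2 _]] := good_in_V.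
have sizeL : size L = k.*2 by rewrite size_cat s1 s2 addnn.
have := double_size_undup_leq good_count_ge2; rewrite sizeL leq_double => undupL.
have lower : k <= (size (undup [seq e <- L | ~~ loop e])).+1.
  rewrite -{1}good_wtw_cat; apply: leq_trans (wtw_leq_nonloop _) _; first by case: (w1) nw1.
  rewrite ltnS; apply: size_undup_subset => e; rewrite !mem_filter => /andP [ne ew].
  by rewrite ne; apply: nonloop_steps_cat ew ne; rewrite l1 h2.
have loops_pos : 0 < size (undup [seq e <- L | loop e]).
  case/hasP: loop1 => e e1 le.
  have : e \in undup [seq e <- L | loop e] by rewrite mem_undup mem_filter le mem_cat e1.
  by case: (undup _).
have := size_undup_filterC loop L.
rewrite -[filter loop L]/[seq e <- L | loop e] -[filter (predC loop) L]/[seq e <- L | ~~ loop e].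
move=> split_size.
split; try lia.
by apply: (count_mem_eq2 good_count_ge2); rewrite sizeL; congr double; lia.
Qed.

Lemma good_loop_unique e f : e \in L -> f \in L -> loop e -> loop f -> e = f.
Proof.
have [loops1 _ _] := good_edge_counts; move=> eL fL le lf.
by apply: (mem_size1 loops1); rewrite mem_undup mem_filter ?le ?lf.
Qed.

Lemma good_nonloop_not_shared e : ~~ loop e -> e \in steps w1 -> e \notin steps w2.
Proof.
move=> ne e1; apply/negP => e2.
have [/in_V_props [nw1 h1 l1 _ _] /in_V_props [_ h2 l2 _ _]] := good_in_V.
have [_ nonloopsL countL] := good_edge_counts.
have [c1 c2] : count_mem e (steps w1) = 1 /\ count_mem e (steps w2) = 1.
  have := countL e; rewrite mem_cat e1 count_cat => /(_ isT).
  have p1 : 0 < count_mem e (steps w1) by rewrite -has_count has_pred1.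
  have p2 : 0 < count_mem e (steps w2) by rewrite -has_count has_pred1.
  lia.
have [W supW stepsW] := reroute_shared_step h1 l1 h2 l2 ne c1 c2.
set M := [seq f <- L | ~~ loop f & f != e].
have : k <= (size (undup M)).+1.
  rewrite -good_wtw_cat; apply: leq_trans (size_undup_subset supW) _.
  apply: leq_trans (wtw_leq_nonloop _) _.
    have : 1 \in W by apply: supW; rewrite mem_cat head1_mem.
    by case: (W).
  rewrite ltnS; apply: size_undup_subset => f fW; have := stepsW f fW.
  by move: fW; rewrite !mem_filter => /andP [-> _] /andP [-> ->].
have : size (undup M) < size (undup [seq f <- L | ~~ loop f]).
  apply: (uniq_leq_size (s1 := e :: undup M)).
    by rewrite /= undup_uniq mem_undup mem_filter eqxx andbF.
  move=> f; rewrite inE => /orP [/eqP -> | ]; first by rewrite mem_undup mem_filter ne mem_cat e1.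
  by rewrite !mem_undup !mem_filter => /andP [/andP [-> _] ->].
lia.
Qed.

Lemma good_nonloop_count2 e : e \in steps w1 -> ~~ loop e -> count_mem e (steps w1) = 2.
Proof.
move=> e1 ne; have [_ _ countL] := good_edge_counts.
have := countL e; rewrite mem_cat e1 count_cat (count_memPn (good_nonloop_not_shared ne e1)).
by rewrite addn0 => ->.
Qed.

Lemma good_loop : exists s, [/\ loop s, s \in steps w2, count_mem s (steps w1) = 1
  & forall e, e \in L -> loop e -> e = s].
Proof.
have [/in_V_props [_ _ _ _ loop1] /in_V_props [_ _ _ _ loop2]] := good_in_V.
case/hasP: loop1 => s s1 ls; case/hasP: loop2 => s' s2 ls'.
have sL : s \in L by rewrite mem_cat s1.
have s'E : s' = s by apply: good_loop_unique ls' ls; rewrite // mem_cat s2 orbT.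
have [_ _ countL] := good_edge_counts.
exists s; split=> //; first by rewrite -s'E.
  have := countL s sL; rewrite count_cat.
  have p1 : 0 < count_mem s (steps w1) by rewrite -has_count has_pred1.
  have p2 : 0 < count_mem s (steps w2) by rewrite -has_count has_pred1 -s'E.
  lia.
by move=> e eL le; apply: good_loop_unique.
Qed.

Lemma good_size_nonloop : size [seq e <- steps w1 | ~~ loop e] = k.-1.
Proof.
have [s [ls _ c1 loopsE]] := good_loop.
have [/in_V_props [_ _ _ s1 _] _] := good_in_V.
have loops1 : count loop (steps w1) = 1.
  rewrite -c1; apply: eq_in_count => e e1 /=; apply/idP/eqP => [le|->] //.
  by apply: loopsE; rewrite ?mem_cat ?e1.
have := count_predC loop (steps w1); rewrite size_filter s1 loops1.
by rewrite -[count (predC loop) _]/(count (fun e => ~~ loop e) _); lia.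
Qed.

Lemma good_double_wtw : (wtw w1).*2 <= k.+1.
Proof.
have [/in_V_props [nw1 _ _ s1 loop1] _] := good_in_V.
have k_gt0 : 0 < k by rewrite -s1 lt0n size_eq0; case: (steps w1) loop1.
have := double_wtw_leq nw1 (fun e e1 ne => good_nonloop_count2 e1 ne).
by rewrite good_size_nonloop prednK.
Qed.

End GoodPair.

Lemma good_pair_structure k w1 w2 : good_pair k (w1, w2) ->
  [/\ forall x, (x \in w1) && (x \in w2) = (x == 1),
      (wtw w1).*2 = k.+1,
      count_mem (1, 1) (steps w1) = 1
    & forall e, e \in steps w1 ++ steps w2 -> loop e -> e = (1, 1)].
Proof.
move=> good; have [/in_V_props [nw1 h1 _ _ _] /in_V_props [nw2 h2 _ _ _]] := good_in_V good.
have [supp wt1 _] := meet_supports (good_double_wtw good) (good_double_wtw (good_pair_sym good))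
  (good_wtw_cat good) (head1_mem nw1 h1) (head1_mem nw2 h2).
have [s [ls s2 c1 loopsE]] := good_loop good.
have s1 : s \in steps w1 by rewrite -has_pred1 has_count c1.
suff sE : s = (1, 1) by split=> //; rewrite -sE.
have /andP [a1 b1] := mem_steps s1; have /andP [a2 b2] := mem_steps s2.
have := supp s.1; have := supp s.2; rewrite a1 a2 b1 b2 => /esym/eqP <- /esym/eqP.
by case: s {ls s2 c1 loopsE s1 a1 a2 b1 b2} => a b /= ->.
Qed.

Lemma good_pair_checkw k w1 w2 : good_pair k (w1, w2) ->
  (Ncount (1, 1) w1 == 1) && wigner (checkw w1) && (size (checkw w1) == k).
Proof.
move=> good; have [_ wt1 c1 _] := good_pair_structure good.
have [/in_V_props [nw1 _ _ s1 loop1] _] := good_in_V good.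
have k_gt0 : 0 < k by rewrite -s1 lt0n size_eq0; case: (steps w1) loop1.
have sizeC : size (checkw w1) = k by rewrite size_checkw // (good_size_nonloop good) prednK.
rewrite /Ncount c1 sizeC !eqxx andbT /=; apply: wigner_checkw; rewrite ?sizeC //.
  by have [/and5P []] := good_in_V good.
by move=> e e1 ne; rewrite (good_nonloop_count2 good).
Qed.

Lemma good_pair_Ecov (R : comNzRingType) (md mo : nat -> R) k w1 w2 :
  md 1 = 0%R -> mo 2 = 1%R -> good_pair k (w1, w2) -> Ecov md mo w1 w2 = md 2.
Proof.
move=> md1 mo2 good; have [_ _ c1 loopsE] := good_pair_structure good.
have [_ _ countL] := good_edge_counts good.
have in11 : (1, 1) \in steps w1 by rewrite -has_pred1 has_count c1.
have ET2E : ET2 md mo w1 w2 = md 2.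
  rewrite /ET2 /Ncount (bigD1_seq (1, 1)) ?undup_uniq ?mem_undup ?mem_cat ?in11 //=.
  rewrite -count_cat countL ?mem_cat ?in11 // big1_seq ?mulr1 // => e /andP [ne1].
  rewrite mem_undup -count_cat => eL; rewrite countL // /emom.
  by case: ifP => [le | _]; [case/eqP: ne1; apply: loopsE | apply: mo2].
have ET1E : ET md mo w1 = 0%R.
  rewrite /ET /edgesw /Ncount (bigD1_seq (1, 1)) ?undup_uniq ?mem_undup //= c1.
  by rewrite /emom /= md1 mul0r.
by rewrite /Ecov ET2E ET1E mul0r subr0.
Qed.

(** * Equivalence of words and pairs *)

Definition inv_on (s : seq nat) (f : nat -> nat) (y : nat) : nat := nth 0 s (index y (map f s)).

Lemma inv_onK s f : {in s &, injective f} -> {in s, cancel f (inv_on s f)}.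
Proof. by move=> f_inj x xs; rewrite /inv_on nth_index_map. Qed.

Lemma inv_on_inj s f : {in s &, injective f} -> {in map f s &, injective (inv_on s f)}.
Proof.
move=> f_inj _ _ /mapP [x xs ->] /mapP [y ys ->].
by rewrite !inv_onK // => ->.
Qed.

Lemma map_inv_on s t f : {in s &, injective f} -> {subset t <= s} ->
  map (inv_on s f) (map f t) = t.
Proof.
move=> f_inj ts; rewrite -map_comp -[RHS]map_id; apply/eq_in_map => x xt /=.
exact: inv_onK (ts x xt).
Qed.

Lemma equiv_word_sym w w' : equiv_word w w' -> equiv_word w' w.
Proof.
case=> f [f_inj <-]; exists (inv_on w f); split; first exact: inv_on_inj.
exact: map_inv_on.
Qed.

Lemma equiv_word_trans w1 w2 w3 : equiv_word w1 w2 -> equiv_word w2 w3 -> equiv_word w1 w3.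
Proof.
case=> f [f_inj <-] [g [g_inj <-]]; exists (g \o f); split; last by rewrite map_comp.
move=> x y xs ys /= gfxy; apply: f_inj => //; apply: g_inj => //; exact: map_f.
Qed.

Lemma equiv_pair_sym a b : equiv_pair a b -> equiv_pair b a.
Proof.
case: a b => [a1 a2] [b1 b2] [f [f_inj [/= <- <-]]].
exists (inv_on (a1 ++ a2) f); split; first by rewrite /= -map_cat; apply: inv_on_inj.
by split; apply: map_inv_on => // x xa; rewrite mem_cat xa ?orbT.
Qed.

Lemma equiv_pair_trans a b c : equiv_pair a b -> equiv_pair b c -> equiv_pair a c.
Proof.
case: a b c => [a1 a2] [b1 b2] [c1 c2] [f [f_inj [/= <- <-]]] [g [g_inj [/= <- <-]]].
exists (g \o f); split; last by split; rewrite /= map_comp.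
move=> x y xa ya /= gfxy; apply: f_inj => //; apply: g_inj => //; by rewrite -map_cat map_f.
Qed.

Lemma equiv_pair_words a b : equiv_pair a b -> equiv_word a.1 b.1 /\ equiv_word a.2 b.2.
Proof.
case: a b => [a1 a2] [b1 b2] [f [f_inj [/= E1 E2]]].
by split; exists f; split=> // x y xa ya; apply: f_inj; rewrite mem_cat ?xa ?ya ?orbT.
Qed.

Lemma equiv_word_fix1 w w' f : {in w &, injective f} -> map f w = w' ->
  w != [::] -> head 0 w = 1 -> head 0 w' = 1 -> f 1 = 1.
Proof. by case: w => [|x s] //= _ <- _ ->. Qed.

Lemma equiv_pair_of_words (w1 w2 w1' w2' : seq nat) :
  (forall x, (x \in w1) && (x \in w2) = (x == 1)) ->
  (forall x, (x \in w1') && (x \in w2') = (x == 1)) ->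
  w1 != [::] -> w2 != [::] -> head 0 w1 = 1 -> head 0 w2 = 1 -> head 0 w1' = 1 -> head 0 w2' = 1 ->
  equiv_word w1 w1' -> equiv_word w2 w2' -> equiv_pair (w1, w2) (w1', w2').
Proof.
move=> meet meet' nw1 nw2 h1 h2 h1' h2' [f1 [inj1 E1]] [f2 [inj2 E2]].
have f11 := equiv_word_fix1 inj1 E1 nw1 h1 h1'.
have f21 := equiv_word_fix1 inj2 E2 nw2 h2 h2'.
have [one1 one2] := (head1_mem nw1 h1, head1_mem nw2 h2).
have glue x : x \in w1 -> x \in w2 -> f1 x = f2 x.
  move=> x1 x2; have /eqP -> : x == 1 by rewrite -meet x1 x2.
  by rewrite f11 f21.
exists (fun x => if x \in w1 then f1 x else f2 x); split; last first.
  split; rewrite /= -?E1 -?E2; apply/eq_in_map => x xw; first by rewrite xw.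
  by case: ifP => // x1; apply: glue.
have cross x y : x \in w1 -> y \in w2 -> y \notin w1 -> f1 x <> f2 y.
  move=> x1 y2 y1 fxy; have : (f1 x \in w1') && (f1 x \in w2').
    by rewrite -E1 map_f // fxy -E2 map_f.
  by rewrite meet' fxy -f21 => /eqP /inj2 y_eq1; rewrite y_eq1 ?one1 in y1.
move=> x y; rewrite !mem_cat.
by case x1 : (x \in w1); case y1 : (y \in w1) => /= x2 y2 fxy; [apply: inj1
  | case: (cross x y) => //; rewrite y1
  | case: (cross y x) => //; rewrite x1
  | apply: inj2].
Qed.

(** * Counting equivalence classes *)

Definition edge_map (g : nat -> nat) (e : nat * nat) : nat * nat := uedge (g e.1) (g e.2).

Lemma edge_map_uedge g x y : edge_map g (uedge x y) = uedge (g x) (g y).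
Proof. by case: (uedgeE x y) => ->; rewrite /edge_map // uedgeC. Qed.

Lemma steps_map g s : steps (map g s) = map (edge_map g) (steps s).
Proof.
elim: s => [|x [|y s] IH] //.
rewrite (steps_cons2 (g x) (g y) (map g s)) -[g y :: map g s]/(map g (y :: s)) IH.
by rewrite steps_cons2 map_cons edge_map_uedge.
Qed.

Lemma steps_sorted e s : e \in steps s -> e.1 <= e.2.
Proof.
elim: s => [|x [|y s] IH] //; rewrite steps_cons2 in_cons => /orP [/eqP -> | /IH //].
exact: uedge_sorted.
Qed.

Lemma loop_edge_map g e : injective g -> loop (edge_map g e) = loop e.
Proof. by move=> g_inj; rewrite /edge_map loop_uedge (inj_eq g_inj). Qed.

Lemma count_steps_map g s e : injective g -> e \in steps s ->
  count_mem (edge_map g e) (steps (map g s)) = count_mem e (steps s).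
Proof.
move=> g_inj es; rewrite steps_map count_map; apply: eq_in_count => f fs /=.
apply/eqP/eqP => [|-> //]; have := steps_sorted fs; have := steps_sorted es.
case: e f {es fs} => [a b] [c d] /= ab cd; rewrite /edge_map /=.
by case/uedge_inj => -[/g_inj E1 /g_inj E2]; congr pair; lia.
Qed.

Lemma in_V_map g k u : injective g -> g 1 = 1 -> (forall x, 0 < x -> 0 < g x) ->
  in_V k u -> in_V k (map g u).
Proof.
move=> g_inj g1 g_pos /and5P [wu /eqP su cu /eqP hu lu]; apply/and5P; split.
- by apply/allP => _ /mapP [x xu ->]; apply/g_pos/(allP wu).
- by rewrite size_map su.
- by case: u cu {wu su hu lu} => //= x s /eqP {1}->; rewrite last_map.
- by case: u hu {wu su cu lu} => //= x s ->; rewrite g1.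
- rewrite steps_map has_map; apply: sub_has lu => e.
  by rewrite -[preim _ _ e]/(loop (edge_map g e)) loop_edge_map.
Qed.

Lemma ak_wordP k u : ak_word k u ->
  [/\ in_V k u, count_mem (1, 1) (steps u) = 1,
      forall e, e \in steps u -> loop e -> e = (1, 1),
      forall e, e \in steps u -> ~~ loop e -> 2 <= count_mem e (steps u)
    & (wtw u).*2 = k.+1].
Proof.
case/and5P => wu /eqP su cu /eqP hu /and3P [/eqP c1 /and3P [_ wig /eqP wtC] /eqP sC].
have nu : u != [::] by rewrite -size_eq0 su.
have in11 : (1, 1) \in steps u by rewrite -has_pred1 has_count /Ncount in c1 *; rewrite c1.
have loops1 : size (filter loop (steps u)) = 1.
  have := count_predC loop (steps u); move: sC; rewrite size_checkw // size_steps su /=.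
  by rewrite !size_filter -[count (predC loop) _]/(count (fun e => ~~ loop e) _); lia.
split=> //.
- by apply/and5P; split; rewrite ?su ?hu //; apply/hasP; exists (1, 1).
- move=> e eu le; apply: (mem_size1 loops1); by rewrite mem_filter ?le ?eu.
- move=> e eu ne; have := allP wig e; rewrite /Ncount steps_checkw mem_filter ne eu.
  by rewrite count_nonloop_steps //; apply.
- by rewrite -wtw_checkw wtC sC.
Qed.

(* The offset [.+2] also keeps the image of 0 away from 1, so that [shift_off s] is
   injective on all of [nat]. *)
Definition shift_off (s : seq nat) (x : nat) : nat :=
  if x == 1 then 1 else x + (\max_(y <- s) y).+2.

Lemma shift_off_inj s : injective (shift_off s).
Proof. by move=> x y; rewrite /shift_off; case: eqP => [->|x1]; case: eqP => [->|y1]; lia. Qed.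

Lemma shift_off_gt0 s x : 0 < shift_off s x.
Proof. by rewrite /shift_off; case: eqP => // _; lia. Qed.

Lemma shift_off_notin s x : x != 1 -> shift_off s x \notin s.
Proof.
rewrite /shift_off => /negbTE ->; apply/negP.
move=> /(@leq_bigmax_seq _ s (fun=> true) (fun y => y)) /(_ isT).
by move=> /(leq_trans (leq_addl x _)) /ltnW; rewrite ltnn.
Qed.

Lemma good_pair_of_ak k u1 u2 : ak_word k u1 -> ak_word k u2 ->
  good_pair k (u1, map (shift_off u1) u2).
Proof.
move=> /ak_wordP [V1 c1 loops1 nonloops1 wt1] /ak_wordP [V2 c2 loops2 nonloops2 wt2].
set g := shift_off u1; set v := map g u2.
have g_inj := @shift_off_inj u1; have g1 : g 1 = 1 by [].
have g11 : edge_map g (1, 1) = (1, 1) by rewrite /edge_map g1.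
have cv e : e \in steps u2 -> count_mem (edge_map g e) (steps v) = count_mem e (steps u2).
  exact: count_steps_map.
have in11 : (1, 1) \in steps u1 by rewrite -has_pred1 has_count c1.
have cv11 : count_mem (1, 1) (steps v) = 1.
  by rewrite -g11 cv // -has_pred1 has_count c2.
have [/in_V_props [nu1 hu1 _ _ _] /in_V_props [nu2 hu2 _ _ _]] := (V1, V2).
apply/and4P; split=> //.
- apply/andP; split; last by apply/hasP; exists (1, 1); rewrite // -has_pred1 has_count cv11.
  apply/allP => e; rewrite mem_cat /Ncount steps_map => /orP [e1 | /mapP [e' e2 ->]].
    case: (boolP (loop e)) => le; first by rewrite (loops1 e e1 le) c1 -steps_map cv11.
    exact: leq_trans (nonloops1 e e1 le) (leq_addr _ _).
  rewrite -steps_map cv //; case: (boolP (loop e')) => le.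
    by rewrite (loops2 e' e2 le) g11 c1 c2.
  exact: leq_trans (nonloops2 e' e2 le) (leq_addl _ _).
- exact: in_V_map g_inj g1 (fun x _ => shift_off_gt0 u1 x) V2.
- have shared : count (mem v) (undup u1) = 1.
    transitivity (count_mem 1 (undup u1)).
      2: by rewrite count_uniq_mem ?undup_uniq // mem_undup head1_mem.
    apply: eq_in_count => x; rewrite mem_undup /= => xu1.
    apply/mapP/eqP => [[y yu2 xE] | ->]; last by exists 1; rewrite ?head1_mem.
    case: (eqVneq y 1) => [y1|/(@shift_off_notin u1)]; first by rewrite xE y1.
    by rewrite -/g -xE xu1.
  have := size_undup_cat u1 v; rewrite shared /v (undup_map_inj g_inj) size_map.
  by move: wt1 wt2; rewrite /wtp /wtw /= -!muln2 => *; apply/eqP; lia.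
Qed.

Lemma good_pair_ak_word k w1 w2 : good_pair k (w1, w2) -> ak_word k w1.
Proof.
move=> good; have /and5P [wi sz cl hd _] := (good_in_V good).1.
have /andP [/andP [c1 wig] sc] := good_pair_checkw good.
by rewrite /ak_word wi sz cl hd c1 wig sc.
Qed.

Lemma leq_size_rel (T1 T2 : eqType) (r : T1 -> T2 -> Prop) (s : seq T1) (t : seq T2) :
  uniq s -> uniq t -> (forall x, x \in s -> exists2 y, y \in t & r x y) ->
  (forall x x' y, x \in s -> x' \in s -> r x y -> r x' y -> x = x') -> size s <= size t.
Proof.
elim: s t => [|x s IH] t //= /andP [xs s_uniq] t_uniq ex inj.
have [y yt rxy] := ex x (mem_head x s).
have yt_pos : 0 < size t by case: (t) yt.
have in_tail x0 : x0 \in s -> x0 \in x :: s by rewrite in_cons => ->; rewrite orbT.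
suff : size s <= size (rem y t) by rewrite size_rem // -ltnS prednK.
apply: (IH _ s_uniq (rem_uniq y t_uniq)) => [x' x's | x1 x2 y' x1s x2s]; last first.
  by apply: inj; apply: in_tail.
have [y' y't rxy'] := ex x' (in_tail x' x's).
exists y' => //; rewrite mem_rem_uniq // inE y't andbT.
by apply: contraNneq xs => y'y; rewrite (inj x x' y) ?mem_head ?in_tail // -y'y.
Qed.

Lemma equiv_word_map g w : injective g -> equiv_word w (map g w).
Proof. by move=> g_inj; exists g; split=> // x y _ _; apply: g_inj. Qed.

Lemma good_pair_equiv k a b : good_pair k a -> good_pair k b ->
  equiv_word a.1 b.1 -> equiv_word a.2 b.2 -> equiv_pair a b.
Proof.
case: a b => [a1 a2] [b1 b2] ga gb.
have [[supp_a _ _ _] [supp_b _ _ _]] := (good_pair_structure ga, good_pair_structure gb).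
have [/in_V_props [na1 ha1 _ _ _] /in_V_props [na2 ha2 _ _ _]] := good_in_V ga.
have [/in_V_props [_ hb1 _ _ _] /in_V_props [_ hb2 _ _ _]] := good_in_V gb.
exact: equiv_pair_of_words.
Qed.

Lemma size_reps_good_pairs k S A :
  reps (good_pair k) equiv_pair S -> reps (ak_word k) equiv_word A -> size S = size A ^ 2.
Proof.
case=> S_uniq /allP S_good S_inj S_ex [A_uniq /allP A_ak A_inj A_ex].
set AA := [seq (x, y) | x <- A, y <- A].
have AA_uniq : uniq AA by apply: allpairs_uniq => // -[a b] [c d] _ _ [-> ->].
have AAP p : p \in AA -> p.1 \in A /\ p.2 \in A by case/allpairsP => -[x y] [/= xA yA ->].
apply/eqP; rewrite -mulnn -(size_allpairs pair) eqn_leq; apply/andP; split.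
  apply: (leq_size_rel (r := fun a p => equiv_word a.1 p.1 /\ equiv_word a.2 p.2)) => //.
    move=> [a1 a2] aS; have ga := S_good _ aS.
    have [b1 b1A e1] := A_ex _ (good_pair_ak_word ga).
    have [b2 b2A e2] := A_ex _ (good_pair_ak_word (good_pair_sym ga)).
    by exists (b1, b2); rewrite ?allpairs_f.
  move=> a a' p aS a'S [e1 e2] [e1' e2']; apply: S_inj => //.
  apply: good_pair_equiv (S_good _ aS) (S_good _ a'S) _ _.
    exact: equiv_word_trans e1 (equiv_word_sym e1').
  exact: equiv_word_trans e2 (equiv_word_sym e2').
apply: (leq_size_rel (r := fun p a => equiv_pair (p.1, map (shift_off p.1) p.2) a)) => //.
  move=> p /AAP [p1A p2A].
  by have [a aS ea] := S_ex _ (good_pair_of_ak (A_ak _ p1A) (A_ak _ p2A)); exists a.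
move=> [p1 p2] [p1' p2'] a /AAP [p1A p2A] /AAP [p1A' p2A'] /= ea ea'.
have [/= e1 e2] := equiv_pair_words (equiv_pair_trans ea (equiv_pair_sym ea')).
have p1E : p1 = p1' by apply: A_inj.
subst p1'; congr pair; apply: A_inj => //.
apply: equiv_word_trans (equiv_word_map p2 (@shift_off_inj p1)) _.
exact: equiv_word_trans e2 (equiv_word_sym (equiv_word_map p2' (@shift_off_inj p1))).
Qed.

Local Open Scope ring_scope.

Theorem mainTheorem16 (R : realFieldType) (md mo : nat -> R) (k : nat) :
  md 1%N = 0 -> mo 1%N = 0 -> mo 2%N = 1 ->
  odd k -> (3 <= k)%N ->
  (forall w1 w2 : seq nat, good_pair k (w1, w2) ->
     [/\ (forall w, w \in [:: w1; w2] ->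
            (Ncount (1, 1) w == 1)%N && wigner (checkw w) && (size (checkw w) == k)),
         (forall x, (x \in w1) && (x \in w2) = (x == 1)%N) &
         Ecov md mo w1 w2 = md 2%N])
  /\
  (forall (S : seq (seq nat * seq nat)) (A : seq (seq nat)),
     reps (good_pair k) equiv_pair S ->
     reps (ak_word k) equiv_word A ->
     \sum_(a <- S) Ecov md mo a.1 a.2 = ((size A) ^ 2)%:R * md 2%N).
Proof.
move=> md1 _ mo2 _ _; split.
  move=> w1 w2 good; have [supp _ _ _] := good_pair_structure good.
  split=> //; last exact: good_pair_Ecov md1 mo2 good.
  move=> w; rewrite !inE => /orP [] /eqP ->; first exact: good_pair_checkw good.
  exact: good_pair_checkw (good_pair_sym good).
move=> S A S_reps A_reps; rewrite -(size_reps_good_pairs S_reps A_reps).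
rewrite (eq_big_seq (fun=> md 2%N)) => [|[w1 w2] aS]; last first.
  by case: S_reps => _ /allP S_good _ _; apply: good_pair_Ecov md1 mo2 (S_good _ aS).
by rewrite big_const_seq count_predT iter_addr_0 mulr_natl.
Qed.
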